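(* Let $n\ge2$ and for $P\in\mathrm{Mat}(n^2,\mathbb{C})$ put $P_1=P\otimes I_n$, $P_2=I_n\otimes P$. (a) Let $Q>0$ be real and let $P$ be a nontrivial solution of rank $r$ to $$P^*=P,\quad P^2=P,\quad Q^2(P_1P_2P_1-P_2P_1P_2)=P_1-P_2 .\qquad(\ast)$$ Let $k=\tfrac12\operatorname{rank}(P_1-P_2)$. Then for all integers $m\ge1$, $$\operatorname{tr}_3\big((P_1P_2)^m\big)=rn+(Q^{-2m}-1)\,k .$$ (b) Let $P$ be an orthogonal projection of rank $r$. If there exist a real constant $Q>1$ and a positive integer $k$ such that $\operatorname{tr}_3\big((P_1P_2)^m\big)=rn+(Q^{-2m}-1)k$ holds for $m=1,2,3$, then $P$ is a nontrivial solution of $(\ast)$ for this $Q$.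
   Context: $I_n$ is the $n\times n$ identity matrix, $\otimes$ the Kronecker product, $\operatorname{tr}_3$ the matrix trace on $\mathrm{Mat}(n^3,\mathbb{C})$. A solution of $(\ast)$ is trivial if $P=0$ or $P=I_n\otimes I_n$, nontrivial otherwise. *)

From HB Require Import structures.
From mathcomp Require Import all_boot all_order all_algebra.
From mathcomp Require Export mxtens.
Set Implicit Arguments. Unset Strict Implicit. Unset Printing Implicit Defensive.
Import Order.TTheory GRing.Theory Num.Theory.
Local Open Scope ring_scope.

(* Complex numbers are modelled by an arbitrary numClosedFieldType C
   (e.g. the complex numbers R[i] over a realType R); a "real" scalar is
   an element of Num.real. *)

Definition adjmx (C : numClosedFieldType) m n (A : 'M[C]_(m, n)) : 'M[C]_(n, m) :=
  (map_mx Num.conj A)^T.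

Definition Pone (C : numClosedFieldType) n (P : 'M[C]_(n * n)) : 'M[C]_(n * n * n) :=
  P *t (1%:M : 'M[C]_n).

Definition Ptwo (C : numClosedFieldType) n (P : 'M[C]_(n * n)) : 'M[C]_(n * n * n) :=
  castmx (mulnA n n n, mulnA n n n) ((1%:M : 'M[C]_n) *t P).

Definition orth_proj (C : numClosedFieldType) N (P : 'M[C]_N) : Prop :=
  adjmx P = P /\ P *m P = P.

Definition is_solution (C : numClosedFieldType) n (Q : C) (P : 'M[C]_(n * n)) : Prop :=
  orth_proj P /\
  Q ^+ 2 *: (Pone P *m Ptwo P *m Pone P - Ptwo P *m Pone P *m Ptwo P)
    = Pone P - Ptwo P.

Definition nontrivial (C : numClosedFieldType) n (P : 'M[C]_(n * n)) : Prop :=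
  P != 0 /\ P != 1%:M.

From HB Require Import structures.
From mathcomp Require Import all_boot all_order all_algebra.
From mathcomp Require Import mxtens ring.
Import Order.TTheory GRing.Theory Num.Theory.
Local Open Scope ring_scope.
Set Implicit Arguments. Unset Strict Implicit. Unset Printing Implicit Defensive.

(* Write X = P_1, Y = P_2 (orthogonal projections of equal trace r n),
   D = X - Y and B = X - XYX = X (1 - Y) X.  Then D^3 = D - (XYX - YXY),
   X D^2 = D^2 X = B, tr (XY)^m = tr (XYX)^m and tr D^2 = 2 tr B.
   (a) With q = Q^-2 the relation reads XYX - YXY = q D.  Sandwiching it by X
   gives B^2 = (1 - q) B, hence (XYX)^m = X - (1 + q + ... + q^(m-1)) B; and
   D^3 = (1 - q) D makes D^2 / (1 - q) a projection of the rank of D, so that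
   2 tr B = (1 - q) rank D.
   (b) With p = 1 - Q^-2 the three trace identities say tr B^j = p^j k for
   j = 1, 2, 3, so tr (B (B - p)^2) = 0; since B = W W^* this forces
   B^2 = p B, and symmetrically for Y - YXY.  Then X D^4 = p X D^2 and
   Y D^4 = p Y D^2, i.e. D^5 = p D^3, and for the hermitian D this yields
   D^3 = p D, i.e. XYX - YXY = Q^-2 D.  Finally P = 0 or P = 1 would give
   tr (XY) = tr X, which the case m = 1 excludes. *)

Section Adjoint.
Variable C : numClosedFieldType.

Lemma adjmxM m n p (A : 'M[C]_(m, n)) (B : 'M[C]_(n, p)) :
  adjmx (A *m B) = adjmx B *m adjmx A.
Proof. by rewrite /adjmx map_mxM trmx_mul. Qed.

Lemma adjmxB m n (A B : 'M[C]_(m, n)) : adjmx (A - B) = adjmx A - adjmx B.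
Proof. by rewrite /adjmx map_mxB linearB. Qed.

Lemma adjmxZ m n a (A : 'M[C]_(m, n)) : adjmx (a *: A) = a^* *: adjmx A.
Proof. by rewrite /adjmx map_mxZ linearZ. Qed.

Lemma adjmx1 n : adjmx (1%:M : 'M[C]_n) = 1%:M.
Proof. by rewrite /adjmx map_mx1 trmx1. Qed.

Lemma adjmx_tens m n p q (A : 'M[C]_(m, n)) (B : 'M[C]_(p, q)) :
  adjmx (A *t B) = adjmx A *t adjmx B.
Proof. by rewrite /adjmx map_mxT trmx_tens. Qed.

Lemma adjmx_castmx m n (e : m = n) (A : 'M[C]_m) :
  adjmx (castmx (e, e) A) = castmx (e, e) (adjmx A).
Proof. by case: n / e. Qed.

Lemma adjmxZ_real m n a (A : 'M[C]_(m, n)) :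
  a \is Num.real -> adjmx (a *: A) = a *: adjmx A.
Proof. by move=> areal; rewrite adjmxZ conj_Creal. Qed.

Lemma mxtrace_adjmx_mul_eq0 m n (A : 'M[C]_(m, n)) :
  \tr (adjmx A *m A) = 0 -> A = 0.
Proof.
have -> : \tr (adjmx A *m A) = \sum_i \sum_j `|A j i| ^+ 2.
  by apply: eq_bigr => i _; rewrite !mxE; apply: eq_bigr => j _; rewrite !mxE normCKC.
have sqr_ge0 (x : C) : 0 <= `|x| ^+ 2 by apply: exprn_ge0.
move=> /psumr_eq0P sum0; apply/matrixP => j i; rewrite mxE.
have /psumr_eq0P col0 : \sum_j `|A j i| ^+ 2 = 0.
  by apply: sum0 => // k _; apply: sumr_ge0.
by apply/eqP; rewrite -normr_eq0 -sqrf_eq0 col0.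
Qed.

Lemma hermitian_sqr_eq0 n (H : 'M[C]_n) : adjmx H = H -> H *m H = 0 -> H = 0.
Proof. by move=> aH HH; apply: mxtrace_adjmx_mul_eq0; rewrite aH HH mxtrace0. Qed.

End Adjoint.

Section Trace.
Variable R : comPzRingType.

Lemma mxtrace_castmx m n (e : m = n) (A : 'M[R]_m) : \tr (castmx (e, e) A) = \tr A.
Proof. by case: n / e. Qed.

Lemma castmx_mulmx m n (e : m = n) (A B : 'M[R]_m) :
  castmx (e, e) (A *m B) = castmx (e, e) A *m castmx (e, e) B.
Proof. by case: n / e. Qed.

Lemma castmx1 m n (e : m = n) : castmx (e, e) (1%:M : 'M[R]_m) = 1%:M.
Proof. by case: n / e. Qed.

Lemma tensmx11 m n : (1%:M : 'M[R]_m) *t (1%:M : 'M[R]_n) = 1%:M.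
Proof.
apply/matrixP => i j.
case: (mxtens_indexP i) => i1 i2; case: (mxtens_indexP j) => j1 j2.
by rewrite tensmxE !mxE (can_eq (@mxtens_indexK m n)) xpair_eqE -natrM mulnb.
Qed.

Lemma mxtrace_tens m n (A : 'M[R]_m) (B : 'M[R]_n) : \tr (A *t B) = \tr A * \tr B.
Proof.
rewrite /mxtrace (reindex (@mxtens_index m n)) /=; last first.
  by exists (@mxtens_unindex m n) => x _; [apply: mxtens_indexK | apply: mxtens_unindexK].
rewrite big_distrl /=; under [RHS]eq_bigr do rewrite big_distrr /=.
rewrite pair_big /=; apply: eq_bigr => -[i j] _.
by rewrite tensmxE.
Qed.

Lemma mxtrace_pid_mx n r : (r <= n)%N -> \tr (pid_mx r : 'M[R]_n) = r%:R.
Proof.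
move=> le_rn; have -> : \tr (pid_mx r : 'M[R]_n) = \sum_(0 <= i < n | true && (i < r)%N) 1.
  rewrite big_mkord /mxtrace [RHS]big_mkcond /=.
  by apply: eq_bigr => i _; rewrite mxE eqxx /=; case: (i < r)%N.
by rewrite -big_nat_widen // sumr_const_nat subn0.
Qed.

End Trace.

Lemma mxrank_idempotent (F : fieldType) n (E : 'M[F]_n) :
  E *m E = E -> (\rank E)%:R = \tr E.
Proof.
move=> EE; have defE := mulmx_ebase E.
set L := col_ebase E in defE; set U := row_ebase E in defE.
set p := pid_mx _ in defE.
have uL : L \in unitmx by apply: col_ebase_unit.
have uU : U \in unitmx by apply: row_ebase_unit.
have pp : p *m p = p by apply: pid_mx_id; apply: rank_leq_row.
have pULp : p *m (U *m L) *m p = p.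
  have : L *m (p *m (U *m L) *m p) *m U = L *m p *m U.
    by rewrite defE -[RHS]EE -defE !mulmxA.
  by move/(canRL (mulmxK uU)); rewrite mulmxK // => /(canRL (mulKmx uL)); rewrite mulKmx.
have -> : \tr E = \tr (p *m (U *m L) *m p).
  transitivity (\tr (U *m L *m p)); first by rewrite -defE mxtrace_mulC mulmxA.
  by rewrite (mxtrace_mulC (p *m _)) mulmxA pp mxtrace_mulC.
by rewrite pULp mxtrace_pid_mx // rank_leq_row.
Qed.

Section HermitianPowers.
Variables (C : numClosedFieldType) (N : nat).
Implicit Types (D Z : 'M[C]_N).

Lemma adjmx_expr_hermitian D k : adjmx D = D -> adjmx (D ^+ k) = D ^+ k.
Proof.
move=> aD; elim: k => [|k IHk]; first exact: adjmx1.
by rewrite [in LHS]exprSr [in RHS]exprS -!mulmxE adjmxM IHk aD.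
Qed.

Lemma hermitian_cube_mxtrace_sqr D c :
  adjmx D = D -> D ^+ 3 = c *: D -> \tr (D ^+ 2) = c * (\rank D)%:R.
Proof.
move=> aD D3; have D4 : D ^+ 2 * D ^+ 2 = c *: D ^+ 2.
  by rewrite -exprD -[(2 + 2)%N]/(1 + 3)%N exprD D3 expr1 -mulmxE -scalemxAr mulmxE -expr2.
have [c0 | c0] := eqVneq c 0.
  rewrite c0 mul0r (@hermitian_sqr_eq0 _ _ (D ^+ 2)) ?mxtrace0 //.
    exact: adjmx_expr_hermitian.
  by rewrite mulmxE D4 c0 scale0r.
pose E := c^-1 *: D ^+ 2.
have EE : E *m E = E.
  by rewrite /E -scalemxAl -scalemxAr mulmxE D4 !scalerA -mulrA mulVf ?mulr1.
have DE : D = D *m E.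
  by rewrite /E -scalemxAr mulmxE -exprS D3 scalerA mulVf ?scale1r.
have rankE : \rank E = \rank D.
  apply/eqP; rewrite eqn_leq {2}DE mxrankM_maxr andbT.
  by rewrite /E eqmx_scale ?invr_eq0 // expr2 -mulmxE mxrankM_maxl.
by rewrite -rankE mxrank_idempotent // mxtraceZ mulrA mulfV ?mul1r.
Qed.

Lemma hermitian_expr3_scale D p : adjmx D = D -> p \is Num.real ->
  D ^+ 5 = p *: D ^+ 3 -> D ^+ 3 = p *: D.
Proof.
move=> aD preal D5.
have aDk k : adjmx (D ^+ k) = D ^+ k by apply: adjmx_expr_hermitian.
pose T := D ^+ 4 - p *: D ^+ 2; pose M := D ^+ 3 - p *: D.
have DM : D *m M = T by rewrite mulmxBr -scalemxAr mulmxE -!exprS.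
have T0 : T = 0.
  have DT : D *m T = 0 by rewrite mulmxBr -scalemxAr mulmxE -!exprS D5 subrr.
  apply: hermitian_sqr_eq0; first by rewrite adjmxB adjmxZ_real ?aDk.
  rewrite {1}/T mulmxBl -scalemxAl (exprSr _ 3) (exprSr _ 1) -!mulmxE -!mulmxA DT.
  by rewrite !mulmx0 scaler0 subrr.
apply/eqP; rewrite -subr_eq0; apply/eqP/hermitian_sqr_eq0.
  by rewrite adjmxB adjmxZ_real ?aDk ?aD.
by rewrite -/M {1}/M mulmxBl -scalemxAl (exprSr _ 2) -mulmxE -mulmxA DM T0 mulmx0 scaler0 subrr.
Qed.

Lemma mxtrace_gram_mul_sqr_eq0 m (W : 'M[C]_(N, m)) Z :
  adjmx Z = Z -> \tr (W *m adjmx W *m (Z *m Z)) = 0 -> Z *m W = 0.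
Proof.
move=> aZ tr0; apply: mxtrace_adjmx_mul_eq0.
by rewrite adjmxM aZ -tr0 -!mulmxA (mxtrace_mulC W) !mulmxA.
Qed.

End HermitianPowers.

Ltac mxexpand := repeat progress rewrite ?(mulmxBl, mulmxBr, mulmxDl, mulmxDr,
  mulNmx, mulmxN, mulmx1, mul1mx, scalerBr, scalerDr, scalerN)
  -?scalemxAr -?scalemxAl ?mulmxA.

Ltac mxlinear := apply/matrixP => i j; rewrite !mxE; ring.

Lemma mxtrace_expr_mulC (R : comPzRingType) N (A B : 'M[R]_N) m :
  \tr ((A *m B) ^+ m.+1) = \tr ((B *m A) ^+ m.+1).
Proof.
have shift k : (A *m B) ^+ k *m A = A *m (B *m A) ^+ k.
  elim: k => [|k IHk]; first by rewrite !expr0 mul1mx mulmx1.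
  by rewrite !exprS -!mulmxE -!mulmxA IHk.
by rewrite exprSr [in RHS]exprS -!mulmxE mulmxA shift mxtrace_mulC mulmxA.
Qed.

Section Projections.
Variables (C : numClosedFieldType) (N : nat) (X Y : 'M[C]_N).
Hypotheses (idemX : X *m X = X) (idemY : Y *m Y = Y).

Let idemXr (M : 'M[C]_N) : M *m X *m X = M *m X. Proof. by rewrite -mulmxA idemX. Qed.
Let idemYr (M : 'M[C]_N) : M *m Y *m Y = M *m Y. Proof. by rewrite -mulmxA idemY. Qed.
Let idem := (idemX, idemY, idemXr, idemYr).

Lemma expr_mulmx_proj_mulr m : (X *m Y) ^+ m.+1 *m X = (X *m Y *m X) ^+ m.+1.
Proof.
elim: m => [|m IHm]; first by rewrite !expr1.
by rewrite [in RHS]exprSr -mulmxE -IHm exprSr -mulmxE; mxexpand; rewrite ?idem.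
Qed.

Lemma mxtrace_expr_proj_sandwich m :
  \tr ((X *m Y) ^+ m.+1) = \tr ((X *m Y *m X) ^+ m.+1).
Proof.
rewrite -expr_mulmx_proj_mulr mxtrace_mulC exprS -mulmxE !mulmxA.
by rewrite idemX.
Qed.

Lemma proj_sub_expr3 : (X - Y) ^+ 3 = X - Y - (X *m Y *m X - Y *m X *m Y).
Proof. by rewrite !exprS expr0 -!mulmxE mulmx1; mxexpand; rewrite ?idem; mxlinear. Qed.

Lemma proj_sub_sqr_mulr : (X - Y) ^+ 2 *m X = X - X *m Y *m X.
Proof. by rewrite expr2 -mulmxE; mxexpand; rewrite ?idem; mxlinear. Qed.

Lemma proj_sub_sqr_mull : X *m (X - Y) ^+ 2 = X - X *m Y *m X.
Proof. by rewrite expr2 -mulmxE; mxexpand; rewrite ?idem; mxlinear. Qed.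

Lemma mxtrace_proj_sub_sqr : \tr X = \tr Y ->
  \tr ((X - Y) ^+ 2) = 2 * \tr (X - X *m Y *m X).
Proof.
move=> trXY; have -> : (X - Y) ^+ 2 = X + Y - X *m Y - Y *m X.
  by rewrite expr2 -mulmxE; mxexpand; rewrite ?idem; mxlinear.
rewrite !raddfB raddfD /= -trXY -mulmxA (mxtrace_mulC X (Y *m X)) idemXr (mxtrace_mulC Y X).
ring.
Qed.

Section Relation.
Variable q : C.
Hypothesis rel : X *m Y *m X - Y *m X *m Y = q *: (X - Y).

Lemma proj_defect_sqr_rel :
  (X - X *m Y *m X) *m (X - X *m Y *m X) = (1 - q) *: (X - X *m Y *m X).
Proof.
have XYXYX : X *m Y *m X *m Y *m X
    = X *m Y *m X - X *m (X *m Y *m X - Y *m X *m Y) *m X.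
  by mxexpand; rewrite ?idem; mxlinear.
rewrite rel in XYXYX.
by mxexpand; rewrite ?idem XYXYX; mxexpand; rewrite ?idem; mxlinear.
Qed.

Lemma expr_proj_sandwich_rel m : (X *m Y *m X) ^+ m.+1
  = X - (\sum_(i < m.+1) q ^+ i) *: (X - X *m Y *m X).
Proof.
have BB := proj_defect_sqr_rel.
set B := X - X *m Y *m X in BB *.
have XYX_B : X *m Y *m X = X - B by rewrite /B opprB addrC subrK.
have BX : B *m X = B by rewrite /B; mxexpand; rewrite ?idem.
have XB : X *m B = B by rewrite /B; mxexpand; rewrite ?idem.
clearbody B; elim: m => [|m IHm]; first by rewrite expr1 big_ord1 expr0 scale1r XYX_B.
have sumS : \sum_(i < m.+2) q ^+ i = 1 + q * \sum_(i < m.+1) q ^+ i.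
  rewrite big_ord_recl expr0 mulr_sumr; congr (_ + _).
  by apply: eq_bigr => i _; rewrite exprS.
rewrite exprSr -mulmxE IHm XYX_B sumS !mulmxBl !mulmxBr -!scalemxAl BX XB BB idemX.
mxlinear.
Qed.

Lemma mxtrace_proj_defect_rel : adjmx X = X -> adjmx Y = Y -> \tr X = \tr Y ->
  2 * \tr (X - X *m Y *m X) = (1 - q) * (\rank (X - Y))%:R.
Proof.
move=> aX aY trXY; rewrite -mxtrace_proj_sub_sqr //.
apply: hermitian_cube_mxtrace_sqr; first by rewrite adjmxB aX aY.
by rewrite proj_sub_expr3 rel; mxlinear.
Qed.

Lemma mxtrace_expr_proj_rel m : adjmx X = X -> adjmx Y = Y -> \tr X = \tr Y ->
  \tr ((X *m Y) ^+ m.+1) = \tr X + (q ^+ m.+1 - 1) * ((\rank (X - Y))%:R / 2).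
Proof.
move=> aX aY trXY.
rewrite mxtrace_expr_proj_sandwich expr_proj_sandwich_rel raddfB /= mxtraceZ subrX1.
have := mxtrace_proj_defect_rel aX aY trXY.
move: (\tr (X - _)) => t trB.
have two_neq0 : (2 : C) != 0 by rewrite pnatr_eq0.
have -> : t = (1 - q) * (\rank (X - Y))%:R / 2 by rewrite -trB; field.
by field.
Qed.

End Relation.

Section TraceConditions.
Variables p k : C.
Hypothesis preal : p \is Num.real.
Hypothesis trXY_expr : forall m, (1 <= m <= 3)%N ->
  \tr ((X *m Y) ^+ m) = \tr X + ((1 - p) ^+ m - 1) * k.

Lemma proj_defect_sqr_of_mxtrace : adjmx X = X -> adjmx Y = Y ->
  (X - X *m Y *m X) *m (X - X *m Y *m X) = p *: (X - X *m Y *m X).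
Proof.
move=> aX aY.
have trA m : (1 <= m <= 3)%N ->
    \tr ((X *m Y *m X) ^+ m) = \tr X + ((1 - p) ^+ m - 1) * k.
  by case: m => // m; rewrite -mxtrace_expr_proj_sandwich; apply: trXY_expr.
have t1 : \tr (X *m Y *m X) = \tr X + ((1 - p) ^+ 1 - 1) * k.
  by rewrite -trA // expr1.
have t2 : \tr (X *m Y *m X *m Y *m X) = \tr X + ((1 - p) ^+ 2 - 1) * k.
  by rewrite -trA // expr2 -mulmxE; mxexpand; rewrite ?idem.
have t3 : \tr (X *m Y *m X *m Y *m X *m Y *m X) = \tr X + ((1 - p) ^+ 3 - 1) * k.
  by rewrite -trA // (exprSr _ 2) expr2 -!mulmxE; mxexpand; rewrite ?idem.
pose W := X *m (1%:M - Y).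
have WW : W *m adjmx W = X - X *m Y *m X.
  by rewrite /W adjmxM adjmxB adjmx1 aX aY; mxexpand; rewrite ?idem; mxlinear.
pose Z := X - X *m Y *m X - p *: X.
have aZ : adjmx Z = Z by rewrite /Z !adjmxB adjmxZ_real // !adjmxM aX aY mulmxA.
have ZW : Z *m W = 0.
  apply: mxtrace_gram_mul_sqr_eq0 aZ _.
  rewrite WW /Z; mxexpand; rewrite ?idem !(raddfB, raddfD) /= !mxtraceZ t1 t2 t3.
  ring.
have ZB : Z *m (X - X *m Y *m X) = 0 by rewrite -WW mulmxA ZW mul0mx.
apply/eqP; rewrite -subr_eq0 -ZB /Z; apply/eqP.
by mxexpand; rewrite ?idem; mxlinear.
Qed.

End TraceConditions.

Lemma proj_mul_sub_sqr_sqr p :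
  (X - X *m Y *m X) *m (X - X *m Y *m X) = p *: (X - X *m Y *m X) ->
  X *m ((X - Y) ^+ 2 *m (X - Y) ^+ 2) = p *: (X *m (X - Y) ^+ 2).
Proof.
have BX : (X - X *m Y *m X) *m X = X - X *m Y *m X.
  by rewrite -proj_sub_sqr_mulr -mulmxA idemX.
move=> BB; rewrite mulmxA proj_sub_sqr_mull -{1}BX -mulmxA proj_sub_sqr_mull.
by rewrite BB.
Qed.

End Projections.

Section OrthogonalProjections.
Variables (C : numClosedFieldType) (N : nat) (X Y : 'M[C]_N).
Hypotheses (idemX : X *m X = X) (idemY : Y *m Y = Y).
Hypotheses (aX : adjmx X = X) (aY : adjmx Y = Y).

Lemma proj_rel_of_defect_sqr p : p \is Num.real ->
  (X - X *m Y *m X) *m (X - X *m Y *m X) = p *: (X - X *m Y *m X) ->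
  (Y - Y *m X *m Y) *m (Y - Y *m X *m Y) = p *: (Y - Y *m X *m Y) ->
  X *m Y *m X - Y *m X *m Y = (1 - p) *: (X - Y).
Proof.
move=> preal BX BY.
have sqrYX : (Y - X) ^+ 2 = (X - Y) ^+ 2 by rewrite -opprB sqrrN.
have D5 : (X - Y) ^+ 5 = p *: (X - Y) ^+ 3.
  have -> : (X - Y) ^+ 5 = (X - Y) *m ((X - Y) ^+ 2 *m (X - Y) ^+ 2).
    by rewrite !mulmxE -exprD -exprS.
  rewrite mulmxBl -sqrYX (proj_mul_sub_sqr_sqr idemY idemX BY) sqrYX.
  by rewrite (proj_mul_sub_sqr_sqr idemX idemY BX) -scalerBr -mulmxBl mulmxE -exprS.
have aD : adjmx (X - Y) = X - Y by rewrite adjmxB aX aY.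
have D3 := hermitian_expr3_scale aD preal D5.
have := proj_sub_expr3 idemX idemY; rewrite D3 => D3_rel.
by rewrite scalerBl scale1r D3_rel; mxlinear.
Qed.

Lemma proj_rel_of_mxtrace_expr p k : p \is Num.real -> \tr X = \tr Y ->
  (forall m, (1 <= m <= 3)%N -> \tr ((X *m Y) ^+ m) = \tr X + ((1 - p) ^+ m - 1) * k) ->
  X *m Y *m X - Y *m X *m Y = (1 - p) *: (X - Y).
Proof.
move=> preal trXY trXY_expr; apply: proj_rel_of_defect_sqr => //.
  exact: (proj_defect_sqr_of_mxtrace idemX idemY preal trXY_expr).
apply: (proj_defect_sqr_of_mxtrace idemY idemX preal _ aY aX) => -[//|m] lem3.
by rewrite -trXY mxtrace_expr_mulC trXY_expr.
Qed.

End OrthogonalProjections.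

Section KroneckerProjections.
Variable C : numClosedFieldType.

Lemma orth_proj1 n : orth_proj (1%:M : 'M[C]_n).
Proof. by split; rewrite ?adjmx1 ?mulmx1. Qed.

Lemma orth_proj_tens m n (A : 'M[C]_m) (B : 'M[C]_n) :
  orth_proj A -> orth_proj B -> orth_proj (A *t B).
Proof. by move=> [aA AA] [aB BB]; split; rewrite ?adjmx_tens ?tensmx_mul ?aA ?aB ?AA ?BB. Qed.

Lemma orth_proj_castmx m n (e : m = n) (A : 'M[C]_m) :
  orth_proj A -> orth_proj (castmx (e, e) A).
Proof. by move=> [aA AA]; split; rewrite ?adjmx_castmx -?castmx_mulmx ?aA ?AA. Qed.

Lemma mxtrace_orth_proj n (A : 'M[C]_n) : orth_proj A -> \tr A = (\rank A)%:R.
Proof. by move=> [_ AA]; rewrite mxrank_idempotent. Qed.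

Variables (n : nat) (P : 'M[C]_(n * n)).

Lemma orth_proj_Pone : orth_proj P -> orth_proj (Pone P).
Proof. by move=> oP; apply: orth_proj_tens oP (orth_proj1 n). Qed.

Lemma orth_proj_Ptwo : orth_proj P -> orth_proj (Ptwo P).
Proof. by move=> oP; apply/orth_proj_castmx/orth_proj_tens/oP/orth_proj1. Qed.

Lemma mxtrace_Pone : orth_proj P -> \tr (Pone P) = (\rank P * n)%:R.
Proof. by move=> oP; rewrite mxtrace_tens mxtrace1 mxtrace_orth_proj // natrM. Qed.

Lemma mxtrace_Ptwo : orth_proj P -> \tr (Ptwo P) = (\rank P * n)%:R.
Proof.
by move=> oP; rewrite mxtrace_castmx mxtrace_tens mxtrace1 mxtrace_orth_proj // natrM mulrC.
Qed.

Lemma Pone0 : Pone (0 : 'M[C]_(n * n)) = 0.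
Proof. exact: tens0mx. Qed.

Lemma Pone1 : Pone (1%:M : 'M[C]_(n * n)) = 1%:M.
Proof. exact: tensmx11. Qed.

Lemma Ptwo1 : Ptwo (1%:M : 'M[C]_(n * n)) = 1%:M.
Proof. by rewrite /Ptwo tensmx11 castmx1. Qed.

Lemma nontrivial_of_mxtrace : \tr (Pone P *m Ptwo P) != \tr (Pone P) -> nontrivial P.
Proof.
move=> tr_neq; split; apply/eqP => P_triv; move: tr_neq.
  by rewrite P_triv Pone0 mul0mx eqxx.
by rewrite P_triv Pone1 Ptwo1 mulmx1 eqxx.
Qed.

Lemma mxtrace_expr_solution Q m : Q != 0 -> is_solution Q P ->
  \tr ((Pone P *m Ptwo P) ^+ m.+1)
    = (\rank P * n)%:R + (Q ^- (2 * m.+1) - 1) * ((\rank (Pone P - Ptwo P))%:R / 2).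
Proof.
move=> Q_neq0 [oP rel].
have [[aX idemX] [aY idemY]] := (orth_proj_Pone oP, orth_proj_Ptwo oP).
have Q2_neq0 : Q ^+ 2 != 0 by rewrite expf_neq0.
rewrite (mxtrace_expr_proj_rel idemX idemY (q := Q ^- 2)) ?mxtrace_Pone ?mxtrace_Ptwo //.
  by rewrite exprVn -exprM.
by rewrite -rel scalerA mulVf ?scale1r.
Qed.

Lemma solution_of_mxtrace_expr Q k : orth_proj P -> Q \is Num.real -> Q != 0 ->
  (forall m, (1 <= m <= 3)%N ->
     \tr ((Pone P *m Ptwo P) ^+ m) = (\rank P * n)%:R + (Q ^- (2 * m) - 1) * k) ->
  is_solution Q P.
Proof.
move=> oP Qreal Q_neq0 trPP; split => //.
have [[aX idemX] [aY idemY]] := (orth_proj_Pone oP, orth_proj_Ptwo oP).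
pose p := 1 - Q ^- 2.
have p_compl : 1 - p = Q ^- 2 by rewrite /p opprB addrCA subrr addr0.
have preal : p \is Num.real by rewrite rpredB ?rpred1 // rpredV rpredX.
rewrite (proj_rel_of_mxtrace_expr idemX idemY aX aY preal (k := k)).
- by rewrite p_compl scalerA mulfV ?scale1r ?expf_neq0.
- by rewrite mxtrace_Pone ?mxtrace_Ptwo.
by move=> m m13; rewrite p_compl exprVn -exprM mxtrace_Pone ?trPP.
Qed.

End KroneckerProjections.

Theorem proposition3 (C : numClosedFieldType) (n r : nat) (P : 'M[C]_(n * n)) :
  (2 <= n)%N -> \rank P = r ->
  (* (a) *)
  (forall Q : C, Q \is Num.real -> 0 < Q ->
     nontrivial P -> is_solution Q P ->
     forall m : nat, (1 <= m)%N ->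
       \tr ((Pone P *m Ptwo P) ^+ m)
         = (r * n)%:R + (Q ^- (2 * m) - 1) * ((\rank (Pone P - Ptwo P))%:R / 2))
  /\
  (* (b) *)
  (orth_proj P ->
   forall (Q : C) (k : nat), Q \is Num.real -> 1 < Q -> (0 < k)%N ->
     (forall m : nat, (1 <= m <= 3)%N ->
        \tr ((Pone P *m Ptwo P) ^+ m) = (r * n)%:R + (Q ^- (2 * m) - 1) * k%:R) ->
     nontrivial P /\ is_solution Q P).
Proof.
(* Part (a) holds for every nonzero Q and every solution. *)
move=> _ <-; split.
  by move=> Q _ Q_gt0 _ sol [//|m] _; apply: mxtrace_expr_solution; rewrite ?gt_eqF.
move=> oP Q k Qreal Q_gt1 k_gt0 trPP.
have Q_gt0 : 0 < Q := lt_trans ltr01 Q_gt1.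
split; last exact: solution_of_mxtrace_expr oP Qreal (lt0r_neq0 Q_gt0) trPP.
apply: nontrivial_of_mxtrace.
rewrite -[Pone P *m _]expr1 trPP // mxtrace_Pone // -subr_eq0 addrAC subrr add0r.
rewrite mulf_neq0 ?pnatr_eq0 -?lt0n // subr_eq0 lt_eqF //.
by rewrite invf_lt1 ?exprn_gt0 // exprn_egt1.
Qed.
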